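(* Let $\mathcal{D}=\mathrm{diag}(u_1,\dots,u_n)$ with all $u_j\neq0$, and let $\mathcal{N}=V_r^{-*}\mathcal{D}^*\mathcal{D}V_r^{-1}$. Then for all integers $\nu_1,\nu_2\ge0$, the pair $(P_\sharp,R_\sharp)$ minimizes $\|E_{\rm TG}^{\nu_1,\nu_2}(P,R)\|_{\mathcal N}$ over all $P,R\in\mathbb{C}^{n\times n_c}$ with $R^*AP$ invertible, i.e. $$(P_\sharp,R_\sharp)\in\operatorname*{argmin}_{P,R\in\mathbb{C}^{n\times n_c}}\|E_{\rm TG}^{\nu_1,\nu_2}(P,R)\|_{\mathcal N},$$ and the minimum value is $|1-\lambda_{n_c+1}|^{\nu_1+\nu_2}$ if $n_c<n$ and $0$ if $n_c=n$.
   Context: Let $A,M\in\mathbb{C}^{n\times n}$ be nonsingular with $M^{-1}A$ and $M^{-*}A^*$ diagonalizable. Let $V_r=[\bm v_{r,1},\dots,\bm v_{r,n}]$ and $V_l=[\bm v_{l,1},\dots,\bm v_{l,n}]$ be invertible matrices of right and left generalized eigenvectors of the pencil $(A,M)$, i.e. $AV_r=MV_r\Lambda$ and $V_l^*A=\Lambda V_l^*M$ with $\Lambda=\mathrm{diag}(\lambda_1,\dots,\lambda_n)$, chosen so that $V_l^*AV_r$ and $V_l^*MV_r$ are diagonal, and ordered so that $|1-\lambda_1|\ge\cdots\ge|1-\lambda_n|\ge0$. Fix $n_c\in\{1,\dots,n\}$. For $P,R\in\mathbb{C}^{n\times n_c}$ with $R^*AP$ invertible, $\Pi(P,R)=P(R^*AP)^{-1}R^*A$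 and $E_{\rm TG}^{\nu_1,\nu_2}(P,R)=(I-M^{-1}A)^{\nu_2}(I-\Pi(P,R))(I-M^{-1}A)^{\nu_1}$. $P_\sharp,R_\sharp\in\mathbb{C}^{n\times n_c}$ are any matrices with $\mathrm{range}(P_\sharp)=\mathrm{span}\{\bm v_{r,1},\dots,\bm v_{r,n_c}\}$, $\mathrm{range}(R_\sharp)=\mathrm{span}\{\bm v_{l,1},\dots,\bm v_{l,n_c}\}$. For Hermitian positive definite $\mathcal N$, $\|x\|_{\mathcal N}=(x^*\mathcal Nx)^{1/2}$ and $\|Z\|_{\mathcal N}=\max_{x\neq0}\|Zx\|_{\mathcal N}/\|x\|_{\mathcal N}$. *)

From HB Require Import structures.
From mathcomp Require Import all_boot all_order all_algebra.
From mathcomp Require Import complex.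
From mathcomp Require Import classical_sets reals.
Set Implicit Arguments. Unset Strict Implicit. Unset Printing Implicit Defensive.
Import Order.TTheory GRing.Theory Num.Theory.
Local Open Scope ring_scope.
Local Open Scope complex_scope.
Local Open Scope classical_set_scope.

Section Defs.
Variable R : realType.
Local Notation C := R[i].

Definition ctmx m p (Z : 'M[C]_(m, p)) : 'M[C]_(p, m) := (map_mx Num.conj Z)^T.

(* matrix power Z^k (iterated product; avoids the n = n'.+1 ring structure) *)
Definition mxpow n (Z : 'M[C]_n) (k : nat) : 'M[C]_n := iter k (mulmx Z) 1%:M.

Definition PiPR n nc (A : 'M[C]_n) (P Q : 'M[C]_(n, nc)) : 'M[C]_n :=
  P *m invmx (ctmx Q *m A *m P) *m ctmx Q *m A.

Definition ETG n nc (A M : 'M[C]_n) (nu1 nu2 : nat) (P Q : 'M[C]_(n, nc)) : 'M[C]_n :=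
  mxpow (1%:M - invmx M *m A) nu2 *m (1%:M - PiPR A P Q)
    *m mxpow (1%:M - invmx M *m A) nu1.

(* ||x||_N = (x^* N x)^{1/2}  (x^* N x is real for N Hermitian p.d.) *)
Definition vnorm n (N : 'M[C]_n) (x : 'cV[C]_n) : R :=
  Num.sqrt (complex.Re ((ctmx x *m N *m x) 0 0)).

Definition opnorm n (N : 'M[C]_n) (Z : 'M[C]_n) : R :=
  sup [set r : R | exists2 x : 'cV[C]_n, x != 0 & r = vnorm N (Z *m x) / vnorm N x].

(* span of the first nc columns of V, as a row space of transposed columns *)
Definition first_cols_span n (nc : nat) (V : 'M[C]_n) :=
  (\sum_(j < n | (j < nc)%N) <<(col j V)^T>>)%MS.

End Defs.

From HB Require Import structures.
From mathcomp Require Import all_boot all_order all_algebra.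
From mathcomp Require Import complex.
From mathcomp Require Import boolp classical_sets reals.
From mathcomp Require Import zify.
Set Implicit Arguments. Unset Strict Implicit. Unset Printing Implicit Defensive.
Import Order.TTheory GRing.Theory Num.Theory.
Local Open Scope ring_scope.
Local Open Scope complex_scope.

(* With S := D V_r^-1 we have N = S^* S, so the N-norm of Z is the spectral
   norm of S Z S^-1.  This change of basis turns the smoother I - M^-1 A into
   diag(1 - lam_j), and turns Pi(P#, R#) into the coordinate projection onto
   the first n_c coordinates, so the conjugated sharp error is diagonal with
   entries (1 - lam_j)^(nu1 + nu2) for j > n_c and 0 otherwise; its norm is
   |1 - lam_(n_c+1)|^(nu1 + nu2).  For any other pair (P, R), the n_c x n
   matrix R^* A S^-1 has a nonzero kernel vector y supported on the first
   n_c + 1 coordinates.  Such a y is fixed by I - S Pi(P, R) S^-1, so the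
   conjugated error maps diag(1 - lam)^-nu1 y to diag(1 - lam)^nu2 y, and the
   ordering of the |1 - lam_j| bounds the stretch from below by
   |1 - lam_(n_c+1)|^(nu1 + nu2). *)

Section OperatorNorm.
Variable R : realType.
Local Notation C := R[i].

Lemma ctmxM m p q (X : 'M[C]_(m, p)) (Y : 'M[C]_(p, q)) :
  ctmx (X *m Y) = ctmx Y *m ctmx X.
Proof. by rewrite /ctmx map_mxM trmx_mul. Qed.

Lemma ctmx_unit n (X : 'M[C]_n) : (ctmx X \in unitmx) = (X \in unitmx).
Proof. by rewrite /ctmx unitmx_tr map_unitmx. Qed.

Lemma ctmx_pid m p r : ctmx (pid_mx r : 'M[C]_(m, p)) = pid_mx r.
Proof. by rewrite /ctmx map_pid_mx tr_pid_mx. Qed.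

Lemma vnorm_conj n (N S : 'M[C]_n) x :
  vnorm (ctmx S *m N *m S) x = vnorm N (S *m x).
Proof. by rewrite /vnorm ctmxM !mulmxA. Qed.

Lemma opnorm_conj n (N S Z : 'M[C]_n) : S \in unitmx ->
  opnorm (ctmx S *m N *m S) Z = opnorm N (conjmx S Z).
Proof.
move=> Su; rewrite /opnorm (conjumx Z Su); apply: congr1.
apply/seteqP; split => r [x x0 ->].
  exists (S *m x).
    by apply: contraNneq x0 => Sx0; rewrite -(mulKmx Su x) Sx0 mulmx0.
  by rewrite !vnorm_conj -!mulmxA mulKmx.
exists (invmx S *m x).
  by apply: contraNneq x0 => Sx0; rewrite -(mulKVmx Su x) Sx0 mulmx0.
by rewrite !vnorm_conj !mulmxA mulmxV // mul1mx.
Qed.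

Lemma opnorm_ge0 n (N Z : 'M[C]_n) : 0 <= opnorm N Z.
Proof.
rewrite /opnorm; set E := (X in sup X).
(* [sup] is [0] on sets without a supremum. *)
have [supE|/sup_out ->] := pselect (has_sup E); last by [].
have [r Er] := supE.1; apply: (le_trans _ (sup_upper_bound supE _)); last exact: Er.
by case: Er => x _ ->; rewrite divr_ge0 ?sqrtr_ge0.
Qed.

Definition sqnorm n (x : 'cV[C]_n) : C := \sum_i `|x i 0| ^+ 2.

Lemma sqnorm_ge0 n (x : 'cV[C]_n) : 0 <= sqnorm x.
Proof. by apply: sumr_ge0 => i _; rewrite exprn_ge0. Qed.

Lemma sqnorm_eq0 n (x : 'cV[C]_n) : (sqnorm x == 0) = (x == 0).
Proof.
apply/idP/eqP => [|->]; last first.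
  by rewrite /sqnorm big1 // => i _; rewrite mxE normr0 expr0n.
rewrite psumr_eq0 => [/allP x0|i _]; last exact: exprn_ge0.
apply/matrixP => i j; rewrite ord1 mxE.
by have := x0 i (mem_index_enum _); rewrite /= expf_eq0 normr_eq0 => /eqP.
Qed.

Lemma vnorm1E n (x : 'cV[C]_n) : (vnorm 1%:M x)%:C ^+ 2 = sqnorm x.
Proof.
have x2E : (ctmx x *m 1%:M *m x) 0 0 = sqnorm x.
  by rewrite mulmx1 !mxE; apply: eq_bigr => i _; rewrite normCKC !mxE.
have x2_real : sqnorm x \is Num.real by rewrite ger0_real ?sqnorm_ge0.
have Re_ge0 : 0 <= complex.Re (sqnorm x).
  by have := sqnorm_ge0 x; rewrite lecE => /andP[].
by rewrite /vnorm x2E -rmorphXn sqr_sqrtr //= RRe_real.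
Qed.

Lemma vnorm1_ge0 n (x : 'cV[C]_n) : 0 <= vnorm 1%:M x.
Proof. exact: sqrtr_ge0. Qed.

Lemma vnorm1_gt0 n (x : 'cV[C]_n) : x != 0 -> 0 < vnorm 1%:M x.
Proof.
move=> x0; rewrite lt_def vnorm1_ge0 andbT; apply: contraNneq x0 => x0.
by rewrite -sqnorm_eq0 -vnorm1E x0 expr0n.
Qed.

Lemma lecR_sqr (a b : R) : 0 <= a -> 0 <= b -> (a <= b) = (a%:C ^+ 2 <= b%:C ^+ 2).
Proof. by move=> a0 b0; rewrite ler_pXn2r ?nnegrE ?ler0c // lecR. Qed.

Lemma vnorm1_le_scaleE n p (x : 'cV[C]_n) (y : 'cV[C]_p) (m : C) : 0 <= m ->
  (vnorm 1%:M y <= complex.Re m * vnorm 1%:M x) = (sqnorm y <= m ^+ 2 * sqnorm x).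
Proof.
move=> m0; have m_real := ger0_real m0.
have Rem0 : 0 <= complex.Re m by rewrite -lecR RRe_real.
rewrite lecR_sqr ?mulr_ge0 ?vnorm1_ge0 // rmorphM /= RRe_real //.
by rewrite exprMn !vnorm1E.
Qed.

Lemma vnorm1_ge_scaleE n p (x : 'cV[C]_n) (y : 'cV[C]_p) (m : C) : 0 <= m ->
  (complex.Re m * vnorm 1%:M x <= vnorm 1%:M y) = (m ^+ 2 * sqnorm x <= sqnorm y).
Proof.
move=> m0; have m_real := ger0_real m0.
have Rem0 : 0 <= complex.Re m by rewrite -lecR RRe_real.
rewrite lecR_sqr ?mulr_ge0 ?vnorm1_ge0 // rmorphM /= RRe_real //.
by rewrite exprMn !vnorm1E.
Qed.

Lemma normr_le_vnorm1 n (x : 'cV[C]_n) i : `|x i 0| <= (vnorm 1%:M x)%:C.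
Proof.
have sq_le : `|x i 0| ^+ 2 <= (vnorm 1%:M x)%:C ^+ 2.
  by rewrite vnorm1E /sqnorm (bigD1 i) //= lerDl sumr_ge0 // => j _; rewrite exprn_ge0.
by rewrite -(@ler_pXn2r _ 2) // ?normr_nneg // nnegrE ler0c vnorm1_ge0.
Qed.

Lemma sqnorm_mulmx_le n p (K : 'M[C]_(p, n)) :
  exists2 m : C, 0 <= m & forall x, sqnorm (K *m x) <= m ^+ 2 * sqnorm x.
Proof.
pose k i : C := \sum_j `|K i j|.
have k_ge0 i : 0 <= k i by rewrite sumr_ge0.
exists (sqrtC (\sum_i k i ^+ 2)).
  by rewrite sqrtC_ge0 sumr_ge0 // => i _; rewrite exprn_ge0.
move=> x; rewrite sqrtCK -[sqnorm x]vnorm1E /sqnorm mulr_suml; apply: ler_sum => i _.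
rewrite -exprMn; apply: lerXn2r;
  rewrite ?normr_nneg ?nnegrE ?mulr_ge0 ?ler0c ?vnorm1_ge0 //.
rewrite mxE (le_trans (ler_norm_sum _ _ _)) // mulr_suml; apply: ler_sum => j _.
by rewrite normrM ler_wpM2l ?normr_ge0 ?normr_le_vnorm1.
Qed.

Lemma opnorm1_ub n (K : 'M[C]_n) (m : C) : 0 <= m ->
  (forall x, sqnorm (K *m x) <= m ^+ 2 * sqnorm x) -> (opnorm 1%:M K)%:C <= m.
Proof.
move=> m0 Km; rewrite -[m]RRe_real ?ger0_real // lecR /opnorm.
have Rem0 : 0 <= complex.Re m by rewrite -lecR RRe_real ?ger0_real.
set E := (X in sup X <= _); have [->|/set0P E0] := eqVneq E set0; first by rewrite sup0.
apply: ge_sup => // _ [x x0 ->].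
by rewrite ler_pdivrMr ?vnorm1_gt0 // vnorm1_le_scaleE.
Qed.

Lemma opnorm1_lb n (K : 'M[C]_n) x (m : C) : x != 0 -> 0 <= m ->
  m ^+ 2 * sqnorm x <= sqnorm (K *m x) -> m <= (opnorm 1%:M K)%:C.
Proof.
move=> x0 m0 Kxm; rewrite -[m]RRe_real ?ger0_real // lecR /opnorm.
apply: (le_trans _ (sup_upper_bound _ _)); last by exists x.
  by rewrite ler_pdivlMr ?vnorm1_gt0 // vnorm1_ge_scaleE.
split; first by exists (vnorm 1%:M (K *m x) / vnorm 1%:M x); exists x.
have [b b0 Kb] := sqnorm_mulmx_le K.
exists (complex.Re b) => _ [y y0 ->].
by rewrite ler_pdivrMr ?vnorm1_gt0 // vnorm1_le_scaleE.
Qed.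

End OperatorNorm.

Section Diagonal.
Variable R : realType.
Local Notation C := R[i].

Lemma sqnorm_diag n (d : 'rV[C]_n) (x : 'cV[C]_n) :
  sqnorm (diag_mx d *m x) = \sum_i `|d 0 i| ^+ 2 * `|x i 0| ^+ 2.
Proof. by apply: eq_bigr => i _; rewrite mul_diag_mx mxE normrM exprMn. Qed.

Lemma sqnorm_diag_le n (d : 'rV[C]_n) (x : 'cV[C]_n) (m : C) : 0 <= m ->
  (forall i, `|d 0 i| <= m) -> sqnorm (diag_mx d *m x) <= m ^+ 2 * sqnorm x.
Proof.
move=> m0 dm; rewrite sqnorm_diag mulr_sumr; apply: ler_sum => i _.
by rewrite ler_wpM2r ?exprn_ge0 // lerXn2r ?normr_nneg ?nnegrE.
Qed.

Lemma sqnorm_diag_ge n (d : 'rV[C]_n) (x : 'cV[C]_n) (m : C) : 0 <= m ->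
  (forall i, x i 0 != 0 -> m <= `|d 0 i|) -> m ^+ 2 * sqnorm x <= sqnorm (diag_mx d *m x).
Proof.
move=> m0 dm; rewrite sqnorm_diag mulr_sumr; apply: ler_sum => i _.
have [->|xi0] := eqVneq (x i 0) 0; first by rewrite normr0 expr0n !mulr0.
by rewrite ler_wpM2r ?exprn_ge0 // lerXn2r ?normr_nneg ?nnegrE ?dm.
Qed.

Lemma opnorm1_diag n (d : 'rV[C]_n) j :
  (forall i, `|d 0 i| <= `|d 0 j|) -> (opnorm 1%:M (diag_mx d))%:C = `|d 0 j|.
Proof.
move=> dj; apply/le_anti/andP; split.
  by apply: opnorm1_ub => // x; apply: sqnorm_diag_le.
have ej0 : (delta_mx j 0 : 'cV[C]_n) != 0.
  by apply/eqP => /matrixP/(_ j 0)/eqP; rewrite !mxE !eqxx oner_eq0.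
apply: (opnorm1_lb ej0) => //; apply: sqnorm_diag_ge => // i.
by rewrite mxE; have [->|] := eqVneq i j; rewrite ?eqxx.
Qed.

Lemma diag_mx_unit n (d : 'I_n -> C) :
  (forall j, d j != 0) -> diag_mx (\row_j d j) \in unitmx.
Proof.
by move=> d_neq0; rewrite unitmxE det_diag unitfE; apply/prodf_neq0 => j _; rewrite mxE.
Qed.

Lemma conjmx_diag n (d e : 'rV[C]_n) : diag_mx d \in unitmx ->
  conjmx (diag_mx d) (diag_mx e) = diag_mx e.
Proof. by move=> du; rewrite (conjumx _ du) diag_mxC mulmxK. Qed.

Lemma mxpow0 n (T : 'M[C]_n) : mxpow T 0 = 1%:M.
Proof. by []. Qed.

Lemma mxpowS n (T : 'M[C]_n) k : mxpow T k.+1 = T *m mxpow T k.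
Proof. by []. Qed.

Lemma mxpow_diag n (d : 'I_n -> C) k :
  mxpow (diag_mx (\row_j d j)) k = diag_mx (\row_j d j ^+ k).
Proof.
elim: k => [|k IHk].
  by rewrite mxpow0 -diag_const_mx; congr diag_mx; apply/rowP => j; rewrite !mxE.
by rewrite mxpowS IHk mulmx_diag; congr diag_mx; apply/rowP => j; rewrite !mxE exprS.
Qed.

Lemma conjmx_mxpow n (S T : 'M[C]_n) k : S \in unitmx ->
  conjmx S (mxpow T k) = mxpow (conjmx S T) k.
Proof.
move=> Su; elim: k => [|k IHk]; first by rewrite !mxpow0 conjmx_scalar ?row_free_unit.
by rewrite !mxpowS conjmxM ?inE ?stablemx_unit // IHk.
Qed.

Lemma pid_mx_diag n r : pid_mx r = diag_mx (\row_(j < n) ((j < r)%N)%:R) :> 'M[C]_n.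
Proof.
apply/matrixP => i j; rewrite !mxE; have [->|ij] := eqVneq i j; first by rewrite eqxx.
by move: ij; rewrite -val_eqE /= => /negbTE ->.
Qed.

Lemma conjmx1B n (V f : 'M[C]_n) : V \in unitmx ->
  conjmx V (1%:M - f) = 1%:M - conjmx V f.
Proof. by move=> Vu; rewrite !(conjumx _ Vu) mulmxBr mulmxBl mulmx1 mulmxV. Qed.

Lemma conjumxM n (V f g : 'M[C]_n) : V \in unitmx ->
  conjmx V (f *m g) = conjmx V f *m conjmx V g.
Proof. by move=> Vu; rewrite !(conjumx _ Vu) !mulmxA mulmxKV. Qed.

Lemma conjmx_twogrid n (V T Pi : 'M[C]_n) nu1 nu2 : V \in unitmx ->
  conjmx V (mxpow T nu2 *m (1%:M - Pi) *m mxpow T nu1) =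
    mxpow (conjmx V T) nu2 *m (1%:M - conjmx V Pi) *m mxpow (conjmx V T) nu1.
Proof.
move=> Vu; rewrite !(conjumxM _ _ Vu) (conjmx1B _ Vu).
by rewrite !(conjmx_mxpow _ _ Vu).
Qed.

End Diagonal.

Section CoarseCorrection.
Variable R : realType.
Local Notation C := R[i].

Lemma PiPR_range n nc k (A : 'M[C]_n) (P Q : 'M[C]_(n, nc)) (Z : 'M[C]_(nc, k)) :
  ctmx Q *m A *m P \in unitmx -> PiPR A P Q *m (P *m Z) = P *m Z.
Proof.
move=> Xu; have -> : PiPR A P Q *m (P *m Z) =
    P *m invmx (ctmx Q *m A *m P) *m (ctmx Q *m A *m P) *m Z by rewrite /PiPR !mulmxA.
by rewrite mulmxKV.
Qed.

Lemma PiPR_ker n nc k (A : 'M[C]_n) (P Q : 'M[C]_(n, nc)) (W : 'M[C]_(n, k)) :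
  ctmx Q *m A *m W = 0 -> PiPR A P Q *m W = 0.
Proof. by move=> QAW; rewrite /PiPR -!mulmxA (mulmxA (ctmx Q) A W) QAW !mulmx0. Qed.

Lemma row_pid_mul_tr n nc (V : 'M[C]_n) j :
  row j (pid_mx nc *m V^T) = if (j < nc)%N then (col j V)^T else 0.
Proof.
apply/rowP => k; rewrite pid_mx_diag mul_diag_mx !mxE.
by case: (j < nc)%N; rewrite ?mul1r ?mul0r // !mxE.
Qed.

Lemma first_cols_spanE n nc (V : 'M[C]_n) :
  (first_cols_span nc V == (pid_mx nc : 'M[C]_n) *m V^T)%MS.
Proof.
apply/andP; split.
  apply/sumsmx_subP => j jnc; rewrite genmxE.
  by have := row_sub j ((pid_mx nc : 'M[C]_n) *m V^T); rewrite row_pid_mul_tr jnc.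
apply/row_subP => j; rewrite row_pid_mul_tr; case: ifP => jnc; last exact: sub0mx.
by apply: (sumsmx_sup j) => //; rewrite genmxE.
Qed.

Lemma first_cols_span_factors n nc (V : 'M[C]_n) (P : 'M[C]_(n, nc)) :
  (P^T == first_cols_span nc V)%MS ->
  (exists Z, V *m (pid_mx nc : 'M_n) = P *m Z) /\
  (exists Y, P = V *m (pid_mx nc : 'M_n) *m Y).
Proof.
have /andP [spanV Vspan] := first_cols_spanE nc V.
move=> /andP [PV VP]; split.
  have /submxP [Z ZE] := submx_trans Vspan VP.
  by exists Z^T; rewrite -[P]trmxK -trmx_mul -ZE trmx_mul tr_pid_mx trmxK.
have /submxP [Y YE] := submx_trans PV spanV.
by exists Y^T; rewrite -[P]trmxK YE !trmx_mul tr_pid_mx trmxK.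
Qed.

Lemma pid_mx_diag_comm n nc (G : 'M[C]_n) : is_diag_mx G ->
  pid_mx nc *m G = G *m pid_mx nc.
Proof. by move=> /diag_mxP [g ->]; rewrite pid_mx_diag diag_mxC. Qed.

Lemma coarse_mx_unit n nc (A Vr Vl : 'M[C]_n) (P Q : 'M[C]_(n, nc))
    (Zp Zq : 'M[C]_(nc, n)) :
  (nc <= n)%N -> is_diag_mx (ctmx Vl *m A *m Vr) -> ctmx Vl *m A *m Vr \in unitmx ->
  Vr *m pid_mx nc = P *m Zp -> Vl *m pid_mx nc = Q *m Zq ->
  ctmx Q *m A *m P \in unitmx.
Proof.
set G := ctmx Vl *m A *m Vr => ncn Gdiag Gu VrP VlQ.
have pidG : ctmx Zq *m (ctmx Q *m A *m P) *m Zp = pid_mx nc *m G.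
  have -> : ctmx Zq *m (ctmx Q *m A *m P) *m Zp = ctmx (Q *m Zq) *m A *m (P *m Zp).
    by rewrite ctmxM !mulmxA.
  rewrite -VlQ -VrP ctmxM ctmx_pid.
  have -> : (pid_mx nc : 'M_n) *m ctmx Vl *m A *m (Vr *m pid_mx nc) =
      pid_mx nc *m G *m (pid_mx nc : 'M_n) by rewrite /G !mulmxA.
  by rewrite -mulmxA -pid_mx_diag_comm // mulmxA pid_mx_id.
have rk : \rank ((pid_mx nc : 'M_n) *m G) = nc.
  by rewrite mxrankMfree ?row_free_unit // rank_pid_mx.
rewrite -row_free_unit /row_free eqn_leq rank_leq_row /= -{1}rk -pidG.
exact: leq_trans (mxrankM_maxl _ _) (mxrankM_maxr _ _).
Qed.

Lemma PiPR_sharp n nc (A Vr Vl : 'M[C]_n) (P Q : 'M[C]_(n, nc))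
    (Zp : 'M[C]_(nc, n)) (Yq : 'M[C]_(n, nc)) :
  (nc <= n)%N -> is_diag_mx (ctmx Vl *m A *m Vr) -> ctmx Q *m A *m P \in unitmx ->
  Vr *m pid_mx nc = P *m Zp -> Q = Vl *m pid_mx nc *m Yq ->
  PiPR A P Q *m Vr = Vr *m pid_mx nc.
Proof.
set G := ctmx Vl *m A *m Vr => ncn Gdiag Xu VrP QE.
have Vr_split : Vr = Vr *m pid_mx nc + Vr *m copid_mx nc.
  by rewrite -mulmxDr /copid_mx addrC subrK mulmx1.
have QAVr_copid : ctmx Q *m A *m (Vr *m copid_mx nc) = 0.
  have -> : ctmx Q *m A *m (Vr *m copid_mx nc) =
      ctmx Yq *m (pid_mx nc *m G *m copid_mx nc) by rewrite QE !ctmxM ctmx_pid /G !mulmxA.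
  by rewrite pid_mx_diag_comm // -mulmxA mul_pid_mx_copid // !mulmx0.
by rewrite {1}Vr_split mulmxDr (PiPR_ker P QAVr_copid) addr0 VrP PiPR_range.
Qed.

End CoarseCorrection.

Section LowerBound.
Variable R : realType.
Local Notation C := R[i].

Lemma leading_kernel_vector n k (F : 'M[C]_(k, n)) : (k < n)%N ->
  exists2 y : 'cV[C]_n, y != 0 &
    F *m y = 0 /\ forall j : 'I_n, (k < j)%N -> y j 0 = 0.
Proof.
move=> kn; pose W := pid_mx k.+1 : 'M[C]_n.
have rkW : \rank W = k.+1 by rewrite rank_pid_mx.
have rkK : \rank (kermx F^T) = (n - \rank F^T)%N by rewrite mxrank_ker.
have rkF : (\rank F^T <= k)%N by rewrite rank_leq_col.
have dim_sum := mxrank_sum_cap W (kermx F^T).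
have sum_le := rank_leq_col (W + kermx F^T)%MS.
have /rowV0Pn [v] : (W :&: kermx F^T)%MS != 0.
  by rewrite -mxrank_eq0; apply/eqP => cap0; move: dim_sum; rewrite cap0 rkW rkK; lia.
rewrite sub_capmx => /andP [vW vK] v0; exists v^T; first by rewrite trmx_eq0.
split; first by rewrite -[F]trmxK -trmx_mul (sub_kermxP vK) trmx0.
move=> j kj; have /submxP [Y ->] := vW.
by rewrite /W pid_mx_diag mul_mx_diag !mxE ltnS leqNgt kj mulr0.
Qed.

Lemma opnorm1_twogrid_lb n k (L1 L2 : 'rV[C]_n) (Pi : 'M[C]_n) (F : 'M[C]_(k, n))
    (m1 m2 : C) :
  (k < n)%N -> (forall y : 'cV[C]_n, F *m y = 0 -> Pi *m y = 0) -> 0 <= m1 -> 0 <= m2 ->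
  (forall j : 'I_n, (j <= k)%N -> m1 <= `|L1 0 j|) ->
  (forall j : 'I_n, (j <= k)%N -> m2 <= `|L2 0 j|) ->
  m1 * m2 <= (opnorm 1%:M (diag_mx L2 *m (1%:M - Pi) *m diag_mx L1))%:C.
Proof.
move=> kn PiF m1_ge0 m2_ge0 L1m L2m.
have [y y0 [Fy y_lead]] := leading_kernel_vector F kn.
have y_supp (j : 'I_n) : y j 0 != 0 -> (j <= k)%N.
  by rewrite leqNgt; apply: contraNN => /y_lead ->.
have y_fix : diag_mx L2 *m (1%:M - Pi) *m y = diag_mx L2 *m y.
  by rewrite -mulmxA mulmxBl mul1mx PiF // subr0.
have [->|m1_neq0] := eqVneq m1 0.
  by apply: (opnorm1_lb y0); rewrite mul0r // expr0n mul0r sqnorm_ge0.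
have L1_neq0 (j : 'I_n) : (j <= k)%N -> L1 0 j != 0.
  move=> jk; apply: contra_neq m1_neq0 => L1j0.
  by apply/le_anti; rewrite m1_ge0 andbT -(normr0 C) -L1j0 L1m.
pose x := diag_mx (\row_j (L1 0 j)^-1) *m y.
have L1x : diag_mx L1 *m x = y.
  apply/colP => i; rewrite mulmxA mulmx_diag mul_diag_mx !mxE.
  have [->|yi0] := eqVneq (y i 0) 0; first by rewrite mulr0.
  by rewrite mulfV ?mul1r // L1_neq0 ?y_supp.
have x0 : x != 0 by apply: contra_neq y0 => x0; rewrite -L1x x0 mulmx0.
apply: (opnorm1_lb x0); first by rewrite mulr_ge0.
rewrite -mulmxA L1x y_fix exprMn [m1 ^+ 2 * _]mulrC -mulrA.
apply: (le_trans _ (sqnorm_diag_ge m2_ge0 (fun j yj => L2m j (y_supp j yj)))).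
rewrite ler_wpM2l ?exprn_ge0 // -{1}L1x; apply: sqnorm_diag_ge => // j xj.
apply/L1m/y_supp; apply: contraNneq xj => yj0.
by rewrite /x mul_diag_mx mxE yj0 mulr0.
Qed.

End LowerBound.

Section SharpTwoGrid.
Variables (R : realType) (n nc : nat) (A M Vr : 'M[R[i]]_n) (lam u : 'I_n -> R[i]).
Variables (nu1 nu2 : nat).
Hypotheses (Mu : M \in unitmx) (Vru : Vr \in unitmx).
Hypothesis AVr : A *m Vr = M *m Vr *m diag_mx (\row_j lam j).
Hypothesis u_neq0 : forall j, u j != 0.

Let D := diag_mx (\row_j u j).
Let S := D *m invmx Vr.
Let N := ctmx (invmx Vr) *m ctmx D *m D *m invmx Vr.

Let D_unit : D \in unitmx := diag_mx_unit u_neq0.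

Lemma scaling_unit : S \in unitmx.
Proof. by rewrite unitmx_mul D_unit unitmx_inv. Qed.

Lemma conjmx_scalingE f : conjmx S f = conjmx D (invmx Vr *m f *m Vr).
Proof.
have Vr'u : invmx Vr \in unitmx by rewrite unitmx_inv.
by rewrite (conjuMumx f D_unit Vr'u) (conjVmx _ Vru).
Qed.

Lemma conjmx_smoother :
  conjmx S (1%:M - invmx M *m A) = diag_mx (\row_j (1 - lam j)).
Proof.
have MAVr : invmx M *m A *m Vr = Vr *m diag_mx (\row_j lam j).
  by rewrite -mulmxA AVr -!mulmxA mulKmx.
rewrite (conjmx1B _ scaling_unit) conjmx_scalingE -mulmxA MAVr mulKmx //.
rewrite (conjmx_diag _ D_unit).
by rewrite -diag_const_mx -linearB /=; congr diag_mx; apply/rowP => j; rewrite !mxE.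
Qed.

Lemma conjmx_ETG (P Q : 'M[R[i]]_(n, nc)) : conjmx S (ETG A M nu1 nu2 P Q) =
  diag_mx (\row_j (1 - lam j) ^+ nu2) *m (1%:M - conjmx S (PiPR A P Q))
    *m diag_mx (\row_j (1 - lam j) ^+ nu1).
Proof.
by rewrite /ETG (conjmx_twogrid _ _ _ _ scaling_unit) conjmx_smoother !mxpow_diag.
Qed.

Lemma opnorm_weightedE Z : opnorm N Z = opnorm 1%:M (conjmx S Z).
Proof. by rewrite -(opnorm_conj _ _ scaling_unit) mulmx1 /S ctmxM !mulmxA. Qed.

Variables (Ps Rs : 'M[R[i]]_(n, nc)).
Hypothesis PiVr : PiPR A Ps Rs *m Vr = Vr *m pid_mx nc.
Hypothesis lam_sorted : forall i j : 'I_n, (i <= j)%N -> `|1 - lam j| <= `|1 - lam i|.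

Lemma conjmx_PiPR_sharp : conjmx S (PiPR A Ps Rs) = pid_mx nc.
Proof.
by rewrite conjmx_scalingE -mulmxA PiVr mulKmx // pid_mx_diag (conjmx_diag _ D_unit).
Qed.

Lemma conjmx_ETG_sharp : conjmx S (ETG A M nu1 nu2 Ps Rs) =
  diag_mx (\row_j ((1 - lam j) ^+ (nu1 + nu2) *+ (nc <= j)%N)).
Proof.
rewrite conjmx_ETG conjmx_PiPR_sharp pid_mx_diag -diag_const_mx -linearB /= !mulmx_diag.
congr diag_mx; apply/rowP => j; rewrite !mxE exprD ltnNge.
by case: (nc <= j)%N; rewrite ?subrr ?mulr0 ?mul0r ?subr0 ?mulr1 // mulrC.
Qed.

Lemma opnorm_ETG_sharp (j : 'I_n) : j = nc :> nat ->
  (opnorm N (ETG A M nu1 nu2 Ps Rs))%:C = `|1 - lam j| ^+ (nu1 + nu2).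
Proof.
move=> jE; rewrite opnorm_weightedE conjmx_ETG_sharp.
have -> : `|1 - lam j| ^+ (nu1 + nu2) =
    `|(\row_i ((1 - lam i) ^+ (nu1 + nu2) *+ (nc <= i)%N)) 0 j|.
  by rewrite mxE jE leqnn mulr1n normrX.
apply: opnorm1_diag => i; rewrite !mxE jE leqnn mulr1n.
case: leqP => nci; rewrite ?mulr0n ?normr0 ?normr_ge0 // mulr1n !normrX.
by apply: lerXn2r; rewrite ?normr_nneg //; apply: lam_sorted; rewrite jE.
Qed.

Lemma opnorm_ETG_sharp_full : nc = n -> opnorm N (ETG A M nu1 nu2 Ps Rs) = 0.
Proof.
move=> ncn; apply/le_anti; rewrite opnorm_ge0 andbT -lecR.
rewrite opnorm_weightedE conjmx_ETG_sharp; apply: opnorm1_ub => // x.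
by apply: sqnorm_diag_le => // i; rewrite mxE ncn leqNgt ltn_ord mulr0n normr0.
Qed.

Lemma opnorm_ETG_lb (P Q : 'M[R[i]]_(n, nc)) (j : 'I_n) : j = nc :> nat ->
  ctmx Q *m A *m P \in unitmx ->
  `|1 - lam j| ^+ (nu1 + nu2) <= (opnorm N (ETG A M nu1 nu2 P Q))%:C.
Proof.
move=> jE Xu; rewrite opnorm_weightedE conjmx_ETG exprD.
have ncn : (nc < n)%N by rewrite -jE ltn_ord.
have lam_ge k (i : 'I_n) : (i <= nc)%N ->
    `|1 - lam j| ^+ k <= `|(\row_i (1 - lam i) ^+ k) 0 i|.
  move=> inc; rewrite mxE normrX; apply: lerXn2r; rewrite ?normr_nneg //.
  by apply: lam_sorted; rewrite jE.
apply: (opnorm1_twogrid_lb (F := ctmx Q *m A *m invmx S) ncn);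
  rewrite ?exprn_ge0 //; [move=> y Fy | exact: lam_ge | exact: lam_ge].
have QAy : ctmx Q *m A *m (invmx S *m y) = 0 by rewrite mulmxA.
rewrite (conjumx _ scaling_unit) -(mulmxA _ (invmx S)) -(mulmxA S).
by rewrite (PiPR_ker P QAy) mulmx0.
Qed.

End SharpTwoGrid.

Theorem theorem3p5 (R : realType) (n nc : nat)
  (A M : 'M[R[i]]_n)
  (Vr Vl : 'M[R[i]]_n) (lam : 'I_n -> R[i]) (u : 'I_n -> R[i])
  (Ps Rs : 'M[R[i]]_(n, nc)) (nu1 nu2 : nat) :
  A \in unitmx -> M \in unitmx ->
  diagonalizable (invmx M *m A) ->
  diagonalizable (invmx (ctmx M) *m ctmx A) ->
  Vr \in unitmx -> Vl \in unitmx ->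
  A *m Vr = M *m Vr *m diag_mx (\row_j lam j) ->
  ctmx Vl *m A = diag_mx (\row_j lam j) *m ctmx Vl *m M ->
  is_diag_mx (ctmx Vl *m A *m Vr) ->
  is_diag_mx (ctmx Vl *m M *m Vr) ->
  (forall i j : 'I_n, (i <= j)%N -> `|1 - lam j| <= `|1 - lam i|) ->
  (1 <= nc <= n)%N ->
  (Ps^T == first_cols_span nc Vr)%MS ->
  (Rs^T == first_cols_span nc Vl)%MS ->
  (forall j, u j != 0) ->
  let N := ctmx (invmx Vr) *m ctmx (diag_mx (\row_j u j))
             *m diag_mx (\row_j u j) *m invmx Vr in
  [/\ ctmx Rs *m A *m Ps \in unitmx,
      (forall P Q : 'M[R[i]]_(n, nc), ctmx Q *m A *m P \in unitmx ->
         opnorm N (ETG A M nu1 nu2 Ps Rs) <= opnorm N (ETG A M nu1 nu2 P Q)),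
      (forall j : 'I_n, nat_of_ord j = nc ->
         (opnorm N (ETG A M nu1 nu2 Ps Rs))%:C = `|1 - lam j| ^+ (nu1 + nu2))
    & (nc = n -> opnorm N (ETG A M nu1 nu2 Ps Rs) = 0)].
Proof.
move=> Au Mu _ _ Vru Vlu AVr _ Gdiag _ lam_sorted /andP [_ ncn] Ps_span Rs_span u_neq0 N.
have [[Zp VrP] _] := first_cols_span_factors Ps_span.
have [[Zq VlQ] [Yq RsE]] := first_cols_span_factors Rs_span.
have Gu : ctmx Vl *m A *m Vr \in unitmx by rewrite !unitmx_mul ctmx_unit Vlu Au Vru.
have Xu := coarse_mx_unit ncn Gdiag Gu VrP VlQ.
have PiVr := PiPR_sharp ncn Gdiag Xu VrP RsE.
have sharp j := opnorm_ETG_sharp nu1 nu2 Mu Vru AVr u_neq0 PiVr lam_sorted (j := j).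
have sharp_full := opnorm_ETG_sharp_full nu1 nu2 Mu Vru AVr u_neq0 PiVr.
split=> [| P Q XQu | j jE | ncE]; [exact: Xu | | | exact: sharp_full].
- have [ltn|] := ltnP nc n; last first.
    move=> n_le_nc; have ncE : nc = n by apply/eqP; rewrite eqn_leq ncn.
    apply: (le_trans _ (opnorm_ge0 N (ETG A M nu1 nu2 P Q))).
    by rewrite (sharp_full ncE).
  have := opnorm_ETG_lb nu1 nu2 Mu Vru AVr u_neq0 lam_sorted (j := Ordinal ltn) erefl XQu.
  by rewrite -(sharp (Ordinal ltn) erefl) lecR.
- exact: sharp.
Qed.
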